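(* Let $\Lambda$ be a row-finite $2$-graph with no sources, and suppose $(\alpha_1,\alpha_2,\beta_1,\beta_2)$ is a $(1,1)$-aperiodic quartet at $u\in\Lambda^0$. Then $\Lambda$ has no local periodicity at $u$.
   Context: A $k$-graph is a countable category $\Lambda$ with a functor $d:\Lambda\to\mathbb{N}^k$ satisfying the factorization property: whenever $d(\lambda)=m+n$ there are unique $\mu,\nu$ with $\lambda=\mu\nu$, $d(\mu)=m$, $d(\nu)=n$. $\Lambda^n=d^{-1}(n)$, $\Lambda^0$ the vertices, $r,s$ range and source, $v\Lambda=\{\lambda:r(\lambda)=v\}$, $v\Lambda^n w=\{\lambda: r(\lambda)=v, d(\lambda)=n, s(\lambda)=w\}$. Row-finite: each $v\Lambda^n$ finite; no sources: $v\Lambda^{e_i}\ne\emptyset$ for all $v,i$ ($e_1,e_2$ standard generators of $\mathbb{N}^2$). For $0\le m\le n\le d(\lambda)$, $\lambda(m,n)$ is the unique path with $\lambda=\lambda'\lambda(m,n)\lambda''$, $d(\lambda')=m$, $d(\lambda(m,n))=n-m$. $\Lambda$ has no local periodicity at $v$ if for each $m\neq n\in\mathbb{N}^k$ there is $\lambda\in v\Lambda$ with $d(\lambda)\ge m\vee n$ and $\lambda(m,m+d(\lambda)-(m\vee n))\neq\lambda(n,n+d(\lambda)-(m\vee n))$ ($\vee$ = coordinatewise max). For positive integers $a,b$, an $(a,b)$-aperiodic quartet at $u$ is a tuple $(\alpha_1,\alpha_2,\beta_1,\beta_2)$ with $\alpha_1\neq\alpha_2$ in $u\Lambda^{ae_1}u$,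 $\beta_1\neq\beta_2$ in $u\Lambda^{be_2}u$, such that $\beta_2\alpha_1=\alpha_1\beta_2$, $\beta_2\alpha_2=\alpha_2\beta_2$, $\beta_1\alpha_1=\alpha_2\beta_1$, $\beta_1\alpha_2=\alpha_1\beta_1$. *)

From mathcomp Require Import all_boot.
Set Implicit Arguments. Unset Strict Implicit. Unset Printing Implicit Defensive.

Definition degk (k : nat) := {ffun 'I_k -> nat}.

Definition dadd k (m n : degk k) : degk k := [ffun i => m i + n i].
Definition dsub k (m n : degk k) : degk k := [ffun i => m i - n i].
Definition dmax k (m n : degk k) : degk k := [ffun i => maxn (m i) (n i)].
Definition dzero k : degk k := [ffun _ => 0].
Definition dle k (m n : degk k) : Prop := forall i, m i <= n i.
Definition dunit k (i : 'I_k) : degk k := [ffun j => nat_of_bool (j == i)].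

(* Composition is written comp mu nu = "mu nu" (mu after nu, s mu = r nu). *)
Record kgraph (k : nat) := KGraph {
  Obj : countType;
  Mor : countType;
  rng : Mor -> Obj;
  src : Mor -> Obj;
  idm : Obj -> Mor;
  comp : Mor -> Mor -> Mor;
  deg : Mor -> degk k;
  rng_id : forall v, rng (idm v) = v;
  src_id : forall v, src (idm v) = v;
  rng_comp : forall mu nu, src mu = rng nu -> rng (comp mu nu) = rng mu;
  src_comp : forall mu nu, src mu = rng nu -> src (comp mu nu) = src nu;
  comp_assoc : forall la mu nu, src la = rng mu -> src mu = rng nu ->
     comp la (comp mu nu) = comp (comp la mu) nu;
  comp_id_l : forall mu, comp (idm (rng mu)) mu = mu;
  comp_id_r : forall mu, comp mu (idm (src mu)) = mu;
  deg_id : forall v, deg (idm v) = dzero k;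
  deg_comp : forall mu nu, src mu = rng nu ->
     deg (comp mu nu) = dadd (deg mu) (deg nu);
  factorization : forall la (m n : degk k), deg la = dadd m n ->
     exists! p : Mor * Mor,
       [/\ src p.1 = rng p.2, la = comp p.1 p.2, deg p.1 = m & deg p.2 = n]
}.


Arguments rng {_} _ _.
Arguments src {_} _ _.
Arguments idm {_} _ _.
Arguments deg {_} _ _.
Arguments comp {_} _ _ _.
Section Defs.
Variables (k : nat) (L : kgraph k).

Definition row_finite : Prop :=
  forall (v : Obj L) (n : degk k), exists s : seq (Mor L),
    forall la, rng L la = v -> deg L la = n -> la \in s.

Definition no_sources : Prop :=
  forall (v : Obj L) (i : 'I_k), exists la, rng L la = v /\ deg L la = dunit i.

(* seg la m n mu : mu = la(m,n), i.e. la = la' mu la'' with d(la') = m,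
   d(mu) = n - m (for 0 <= m <= n <= d(la) this mu exists and is unique) *)
Definition seg (la : Mor L) (m n : degk k) (mu : Mor L) : Prop :=
  exists la' la'' : Mor L,
    [/\ src L la' = rng L mu, src L mu = rng L la'',
        la = comp L la' (comp L mu la''), deg L la' = m
      & deg L mu = dsub n m].

Definition no_local_periodicity (v : Obj L) : Prop :=
  forall m n : degk k, m <> n ->
    exists la : Mor L, rng L la = v /\ dle (dmax m n) (deg L la) /\
      exists mu1 mu2 : Mor L,
        [/\ seg la m (dsub (dadd m (deg L la)) (dmax m n)) mu1,
            seg la n (dsub (dadd n (deg L la)) (dmax m n)) mu2
          & mu1 <> mu2].

Definition loop_of (u : Obj L) (n : degk k) (la : Mor L) : Prop :=
  [/\ rng L la = u, deg L la = n & src L la = u].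
End Defs.
Arguments no_local_periodicity {k} L v.
Arguments seg {k} L la m n mu.
Arguments no_sources {k} L.
Arguments row_finite {k} L.

Definition e1 : 'I_2 := ord0.
Definition e2 : 'I_2 := ord_max.

Definition aperiodic_quartet (L : kgraph 2) (a b : nat) (u : Obj L)
    (al1 al2 be1 be2 : Mor L) : Prop :=
  [/\ 0 < a, 0 < b,
      [/\ al1 <> al2,
          loop_of u [ffun i => a * dunit e1 i] al1
        & loop_of u [ffun i => a * dunit e1 i] al2],
      [/\ be1 <> be2,
          loop_of u [ffun i => b * dunit e2 i] be1
        & loop_of u [ffun i => b * dunit e2 i] be2]
    & [/\ comp L be2 al1 = comp L al1 be2,
          comp L be2 al2 = comp L al2 be2,
          comp L be1 al1 = comp L al2 be1
        & comp L be1 al2 = comp L al1 be1]].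
Arguments aperiodic_quartet : clear implicits.

(* The loops at u form a monoid End(u) on which the degree is a
   monoid morphism to N^2.  Given m <> n, it suffices to find a loop la of
   degree max(m, n) + e_i that factors both as rho al1 sigma with d(rho) = m
   and as rho' al2 sigma' with d(rho') = n (or likewise through be1 and be2):
   the two segments of la of degree e_i starting at m and at n are then
   distinct.  If the first coordinates differ, say m_1 < n_1, take
   la = al2^(m_1) al1 al2^(n_1 - m_1) be2^M with M = max(m_2, n_2): since be2
   commutes with al1 and al2, the be2's can be slid to the left of the al1
   (giving the m-factorization) or of the last al2 (giving the n-factorization).
   If m_1 = n_1 and m_2 < n_2, take la = al2^(m_1) be2^(m_2) be1 be2^(n_2 - m_2). *)

From HB Require Import structures.
From Pilot Require Import Defs.
From mathcomp Require Import all_boot zify.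
Set Implicit Arguments. Unset Strict Implicit. Unset Printing Implicit Defensive.

Local Open Scope group_scope.

Section EndomorphismMonoid.
Variables (k : nat) (L : kgraph k) (u : Obj L).

Definition is_endo (x : Mor L) : bool := (rng L x == u) && (src L x == u).

Definition endo := {x : Mor L | is_endo x}.

Implicit Types x y z : endo.

Lemma endo_rng x : rng L (val x) = u.
Proof. by case/andP: (valP x) => /eqP. Qed.

Lemma endo_src x : src L (val x) = u.
Proof. by case/andP: (valP x) => _ /eqP. Qed.

Lemma endo_src_rng x y : src L (val x) = rng L (val y).
Proof. by rewrite endo_src endo_rng. Qed.

Lemma is_endo_comp x y : is_endo (Defs.comp L (val x) (val y)).
Proof.
by rewrite /is_endo rng_comp ?src_comp ?endo_rng ?endo_src ?eqxx // endo_src_rng.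
Qed.

Lemma is_endo_id : is_endo (idm L u).
Proof. by rewrite /is_endo rng_id src_id eqxx. Qed.

Definition endo_mul x y : endo := Sub _ (is_endo_comp x y).
Definition endo_one : endo := Sub _ is_endo_id.

Lemma endo_mulA : associative endo_mul.
Proof. by move=> x y z; apply/val_inj/comp_assoc; apply: endo_src_rng. Qed.

Lemma endo_mul1g : left_id endo_one endo_mul.
Proof. by move=> x; apply: val_inj; have := comp_id_l (val x); rewrite endo_rng. Qed.

Lemma endo_mulg1 : right_id endo_one endo_mul.
Proof. by move=> x; apply: val_inj; have := comp_id_r (val x); rewrite endo_src. Qed.

End EndomorphismMonoid.

Arguments endo {k} L u.
Arguments is_endo {k L} u x.

HB.instance Definition _ k (L : kgraph k) u := [Choice of endo L u by <:].
HB.instance Definition _ k (L : kgraph k) u :=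
  isMonoid.Build (endo L u) (@endo_mulA k L u) (@endo_mul1g k L u) (@endo_mulg1 k L u).

Section EndomorphismDegree.
Variables (k : nat) (L : kgraph k) (u : Obj L).
Implicit Types x y : endo L u.

Lemma deg_endoM x y : deg L (val (x * y)) = dadd (deg L (val x)) (deg L (val y)).
Proof. exact: deg_comp (endo_src_rng x y). Qed.

Lemma deg_endoX x n : deg L (val (x ^+ n)) = [ffun i => n * deg L (val x) i]%N.
Proof.
apply/ffunP => i; rewrite ffunE; elim: n => [|n IHn].
  by rewrite expg0 /= deg_id ffunE.
by rewrite expgSr deg_endoM ffunE IHn mulSnr.
Qed.

End EndomorphismDegree.

Lemma dmaxC k (m n : degk k) : dmax m n = dmax n m.
Proof. by apply/ffunP => i; rewrite !ffunE maxnC. Qed.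

Section SeparatingPaths.
Variables (k : nat) (L : kgraph k) (u : Obj L).

Definition separating_path (m n : degk k) (la : Mor L) : Prop :=
  rng L la = u /\ dle (dmax m n) (deg L la) /\
    exists mu1 mu2 : Mor L,
      [/\ seg L la m (dsub (dadd m (deg L la)) (dmax m n)) mu1,
          seg L la n (dsub (dadd n (deg L la)) (dmax m n)) mu2
        & mu1 <> mu2].

Lemma separating_pathC m n la : separating_path m n la -> separating_path n m la.
Proof.
case=> la_u [le_la [mu1 [mu2 [seg1 seg2 neq]]]].
rewrite /separating_path dmaxC; do 2!split=> //.
by exists mu2, mu1; split; last exact/nesym.
Qed.

Lemma seg_of_factorization (la ro mu si : endo L u) (m e M : degk k) :
  la = ro * (mu * si) -> deg L (val ro) = m -> deg L (val mu) = e ->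
  deg L (val la) = dadd M e ->
  seg L (val la) m (dsub (dadd m (deg L (val la))) M) (val mu).
Proof.
move=> -> <- dmu dla; exists (val ro), (val si).
split; [exact: endo_src_rng..| by [] | by [] |].
by rewrite dmu dla; apply/ffunP => i; rewrite !ffunE addnCA !addKn.
Qed.

Lemma separating_path_of_factorizations (la ro1 mu1 si1 ro2 mu2 si2 : endo L u)
    (m n : degk k) :
  la = ro1 * (mu1 * si1) -> la = ro2 * (mu2 * si2) ->
  deg L (val ro1) = m -> deg L (val ro2) = n -> deg L (val mu1) = deg L (val mu2) ->
  deg L (val la) = dadd (dmax m n) (deg L (val mu1)) -> mu1 <> mu2 ->
  separating_path m n (val la).
Proof.
move=> la1 la2 dro1 dro2 dmu dla neq; split; first exact: endo_rng.
split; first by move=> i; rewrite dla !ffunE leq_addr.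
exists (val mu1), (val mu2); split.
- exact: seg_of_factorization la1 dro1 (erefl _) dla.
- by apply: seg_of_factorization la2 dro2 (esym dmu) dla.
- by move/val_inj.
Qed.

End SeparatingPaths.

Arguments separating_path {k} L u m n la.

Definition deg2 (p q : nat) : degk 2 := [ffun i => if i == e1 then p else q].

Lemma deg2_eta (m : degk 2) : m = deg2 (m e1) (m e2).
Proof. by apply/ffunP => -[[|[|//]] i]; rewrite ffunE /=; congr (m _); apply: val_inj. Qed.

Ltac deg2_arith :=
  apply/ffunP => -[[|[|//]] ?]; rewrite !ffunE /=; lia.

Section CommutingPairs.
Variables (L : kgraph 2) (u : Obj L) (a1 a2 b1 b2 : endo L u).
Hypotheses (deg_a1 : deg L (val a1) = deg2 1 0) (deg_a2 : deg L (val a2) = deg2 1 0).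
Hypotheses (deg_b1 : deg L (val b1) = deg2 0 1) (deg_b2 : deg L (val b2) = deg2 0 1).
Hypotheses (b2a1 : commute b2 a1) (b2a2 : commute b2 a2).
Hypotheses (a1_neq_a2 : a1 <> a2) (b1_neq_b2 : b1 <> b2).

Lemma deg_a2X p : deg L (val (a2 ^+ p)) = deg2 p 0.
Proof. rewrite deg_endoX deg_a2; deg2_arith. Qed.

Lemma deg_b2X r : deg L (val (b2 ^+ r)) = deg2 0 r.
Proof. rewrite deg_endoX deg_b2; deg2_arith. Qed.

Lemma separating_path_lt_e1 p q r s :
  p < q -> exists la, separating_path L u (deg2 p r) (deg2 q s) la.
Proof.
move=> /subnKC <-; set j := q - p.+1; set M := maxn r s.
have b2M x : x <= M -> b2 ^+ M = b2 ^+ x * b2 ^+ (M - x).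
  by move=> le_xM; rewrite -expgnDr subnKC.
exists (val (a2 ^+ p * (a1 * (a2 ^+ j.+1 * b2 ^+ M)))).
apply: (separating_path_of_factorizations (ro1 := a2 ^+ p * b2 ^+ r) (mu1 := a1)
          (si1 := a2 ^+ j.+1 * b2 ^+ (M - r))
          (ro2 := a2 ^+ p * a1 * a2 ^+ j * b2 ^+ s) (mu2 := a2) (si2 := b2 ^+ (M - s))).
- rewrite (b2M r) ?leq_maxl // !mulgA; congr (_ * _).
  have c : commute (b2 ^+ r) (a1 * a2 ^+ j.+1).
    exact: commuteM (commuteX2 r 1 b2a1) (commuteX2 r j.+1 b2a2).
  by rewrite -!mulgA c !mulgA.
- rewrite (b2M s) ?leq_maxr // expgSr !mulgA; congr (_ * _).
  have c : commute (b2 ^+ s) a2 := commuteX2 s 1 b2a2.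
  by rewrite -!mulgA c.
- by rewrite deg_endoM !deg_a2X !deg_b2X; deg2_arith.
- by rewrite !deg_endoM !deg_a2X deg_a1 !deg_b2X; deg2_arith.
- by rewrite deg_a1 deg_a2.
- by rewrite !deg_endoM !deg_a2X deg_a1 !deg_b2X; deg2_arith.
- exact: a1_neq_a2.
Qed.

Lemma separating_path_lt_e2 p r s :
  r < s -> exists la, separating_path L u (deg2 p r) (deg2 p s) la.
Proof.
move=> /subnKC <-; set j := s - r.+1.
exists (val (a2 ^+ p * b2 ^+ r * (b1 * b2 ^+ j.+1))).
apply: (separating_path_of_factorizations (ro1 := a2 ^+ p * b2 ^+ r) (mu1 := b1)
          (si1 := b2 ^+ j.+1)
          (ro2 := a2 ^+ p * b2 ^+ r * b1 * b2 ^+ j) (mu2 := b2) (si2 := 1)).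
- by [].
- by rewrite mulg1 expgSr !mulgA.
- by rewrite deg_endoM deg_a2X deg_b2X; deg2_arith.
- by rewrite !deg_endoM deg_a2X !deg_b2X deg_b1; deg2_arith.
- by rewrite deg_b1 deg_b2.
- by rewrite !deg_endoM deg_a2X !deg_b2X deg_b1; deg2_arith.
- exact: b1_neq_b2.
Qed.

Lemma no_local_periodicity_of_commuting_pairs : no_local_periodicity L u.
Proof.
move=> m n; rewrite (deg2_eta m) (deg2_eta n).
case: (ltngtP (m e1) (n e1)) => [lt_mn|lt_nm|->] neq.
- exact: separating_path_lt_e1.
- have [la sep] := separating_path_lt_e1 (n e2) (m e2) lt_nm.
  by exists la; apply: separating_pathC.
case: (ltngtP (m e2) (n e2)) => [lt_mn|lt_nm|eq_mn].
- exact: separating_path_lt_e2.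
- have [la sep] := separating_path_lt_e2 (n e1) lt_nm.
  by exists la; apply: separating_pathC.
- by rewrite eq_mn in neq.
Qed.

End CommutingPairs.

Lemma loop_of_is_endo k (L : kgraph k) (u : Obj L) n (la : Mor L) :
  loop_of u n la -> is_endo u la.
Proof. by case=> rla _ sla; rewrite /is_endo rla sla eqxx. Qed.

Theorem theorem3p5 (L : kgraph 2) (u : Obj L) (al1 al2 be1 be2 : Mor L) :
  row_finite L -> no_sources L ->
  aperiodic_quartet L 1 1 u al1 al2 be1 be2 ->
  no_local_periodicity L u.
Proof.
move=> _ _ [_ _ [al_neq al1_loop al2_loop] [be_neq be1_loop be2_loop] [be2al1 be2al2 _ _]].
have [_ deg_al1 _] := al1_loop; have [_ deg_al2 _] := al2_loop.
have [_ deg_be1 _] := be1_loop; have [_ deg_be2 _] := be2_loop.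
pose a1 : endo L u := Sub al1 (loop_of_is_endo al1_loop).
pose a2 : endo L u := Sub al2 (loop_of_is_endo al2_loop).
pose b1 : endo L u := Sub be1 (loop_of_is_endo be1_loop).
pose b2 : endo L u := Sub be2 (loop_of_is_endo be2_loop).
apply: (@no_local_periodicity_of_commuting_pairs L u a1 a2 b1 b2).
- by rewrite /= deg_al1; deg2_arith.
- by rewrite /= deg_al2; deg2_arith.
- by rewrite /= deg_be1; deg2_arith.
- by rewrite /= deg_be2; deg2_arith.
- by apply: val_inj.
- by apply: val_inj.
- by move/(congr1 val).
- by move/(congr1 val).
Qed.
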